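(* Let $R$ be a discrete $\Gamma$-ring and $w\in R[2]$ a formal sum law in $R$. For every $k\ge1$ and every pointed map $f:[2^k]\to[2^{k-1}]$ such that $f(1_{2^k})=1_{2^{k-1}}$ in $H\mathbb{N}[2^{k-1}]$ (i.e. $f$ maps exactly $2^{k-1}$ elements of $\{1,\dots,2^k\}$ bijectively onto $\{1,\dots,2^{k-1}\}$ and the rest to $0$), one has $f(w^k)=w^{k-1}$ in $R[2^{k-1}]$.
   Context: Let $[n]=\{0,1,\dots,n\}$, pointed at $0$. A $\Gamma$-space is a functor $F$ from finite pointed sets $[n]$ and pointed maps to pointed simplicial sets with $F[0]$ a point; for a pointed map $f$ we write $f$ also for $F(f)$. $\Sigma_n$ acts on $F[n]$ via permutations of $\{1,\dots,n\}$. We identify $[n]\wedge[m]$ with $[nm]$ via $i\wedge j\mapsto (j-1)n+i$. A $\Gamma$-ring is a $\Gamma$-space $R$ with unit $1\in R[1]$ and an associative unital multiplication given by natural maps $R(K)\wedge R(L)\to R(K\wedge L)$, $p\wedge q\mapsto pq$; it is discrete if all $R(K)$ are sets. For $w\in R[2]$, $w^k\in R[2^k]$ is the $k$-fold product. $p^n_i:[n]\to[n-1]$ is given by $p^n_i(j)=j$ for $j<i$, $p^n_i(i)=0$, $p^n_i(j)=j-1$ for $j>i$. $H\mathbb{N}[k]=\mathbb{N}^k$ (reduced free commutative monoid on $[k]$, pointed maps act by summing coefficients along fibres), and $1_n=(1,\dots,1)\in H\mathbb{N}[n]$. A formal sum law in $R$ is $w\in R[2]$ with $p^2_1(w)=p^2_2(w)=1$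 and with $w^k$ fixed by $\Sigma_{2^k}$ for all $k\ge1$. *)

(* Discrete Gamma-rings over the skeleton [n] = {0,...,n},
   encoded as 'I_n.+1 with basepoint ord0. *)
From HB Require Import structures.
From mathcomp Require Import all_boot.
Set Implicit Arguments. Unset Strict Implicit. Unset Printing Implicit Defensive.

Record ptmap (n m : nat) := PMap {
  pfun :> 'I_n.+1 -> 'I_m.+1;
  pfun0 : pfun ord0 == ord0 }.

Lemma pid_subproof n : (@id 'I_n.+1) ord0 == ord0. Proof. exact: eqxx. Qed.
Definition pid n : ptmap n n := PMap (@pid_subproof n).

Lemma pcomp_subproof n m l (g : ptmap m l) (f : ptmap n m) : (g \o f) ord0 == ord0.
Proof. by rewrite /= (eqP (pfun0 f)) (pfun0 g). Qed.
Definition pcomp n m l (g : ptmap m l) (f : ptmap n m) : ptmap n l :=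
  PMap (pcomp_subproof g f).

(* smash product of pointed maps, using [n] ^ [m] = [nm], i ^ j |-> (j-1)n + i *)
Definition smash_fun n m n' m' (f : ptmap n n') (g : ptmap m m')
  (k : 'I_(n * m).+1) : 'I_(n' * m').+1 :=
  if nat_of_ord k == 0 then ord0 else
  let fi : 'I_n'.+1 := f (inord ((k.-1 %% n).+1)) in
  let gj : 'I_m'.+1 := g (inord ((k.-1 %/ n).+1)) in
  if (nat_of_ord fi == 0) || (nat_of_ord gj == 0) then ord0
  else inord ((nat_of_ord gj).-1 * n' + fi).

Lemma smash_subproof n m n' m' (f : ptmap n n') (g : ptmap m m') :
  smash_fun f g ord0 == ord0.
Proof. by rewrite /smash_fun eqxx. Qed.
Definition smash n m n' m' (f : ptmap n n') (g : ptmap m m') : ptmap (n * m) (n' * m') :=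
  PMap (smash_subproof f g).

Definition pface_fun n (i : nat) (j : 'I_n.+2) : 'I_n.+1 :=
  if nat_of_ord j < i then inord j
  else if nat_of_ord j == i then ord0 else inord (nat_of_ord j).-1.

Lemma pface_subproof n (i : nat) : i != 0 -> @pface_fun n i ord0 == ord0.
Proof.
rewrite /pface_fun /= lt0n => ->.
by apply/eqP; apply: val_inj; rewrite /= inordK.
Qed.
Definition pface n i (hi : i != 0) : ptmap n.+1 n := PMap (pface_subproof n hi).

Definition p2_1 : ptmap 2 1 := @pface 1 1 isT.
Definition p2_2 : ptmap 2 1 := @pface 1 2 isT.

Record GammaRing := {
  gcar : nat -> Type;
  gbase : forall n, gcar n;
  gact : forall n m, ptmap n m -> gcar n -> gcar m;
  gone : gcar 1;
  gmul : forall n m, gcar n -> gcar m -> gcar (n * m);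
  gact_id : forall n (x : gcar n), gact (pid n) x = x;
  gact_comp : forall n m l (g : ptmap m l) (f : ptmap n m) (x : gcar n),
      gact (pcomp g f) x = gact g (gact f x);
  gact_base : forall n m (f : ptmap n m), gact f (gbase n) = gbase m;
  gcar0 : forall x y : gcar 0, x = y;
  (* multiplication is defined on the smash product *)
  gmul_basel : forall n m (q : gcar m), gmul (gbase n) q = gbase (n * m);
  gmul_baser : forall n m (p : gcar n), gmul p (gbase m) = gbase (n * m);
  gmul_nat : forall n m n' m' (f : ptmap n n') (g : ptmap m m') p q,
      gact (smash f g) (gmul p q) = gmul (gact f p) (gact g q);
  gmul1 : forall n (p : gcar n),
      eq_rect _ gcar (gmul gone p) _ (mul1n n) = p;
  gmulr1 : forall n (p : gcar n),
      eq_rect _ gcar (gmul p gone) _ (muln1 n) = p;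
  gmulA : forall n m l (p : gcar n) (q : gcar m) (r : gcar l),
      eq_rect _ gcar (gmul p (gmul q r)) _ (mulnA n m l) = gmul (gmul p q) r
}.

Fixpoint wpow (R : GammaRing) (w : gcar R 2) (k : nat) : gcar R (2 ^ k) :=
  match k with
  | 0 => gone R
  | k'.+1 => eq_rect _ (gcar R) (gmul (wpow w k') w) _ (esym (expnSr 2 k'))
  end.

(* H N : action of pointed maps on N^[n] (coordinate 0 ignored) *)
Definition hN_act n m (f : ptmap n m) (x : 'I_n.+1 -> nat) (j : 'I_m.+1) : nat :=
  \sum_(i | f i == j) x i.
Definition hN_ones n (i : 'I_n.+1) : nat := (i != ord0).

Definition formal_sum_law (R : GammaRing) (w : gcar R 2) : Prop :=
  gact p2_1 w = gone R /\ gact p2_2 w = gone R /\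
  forall k, 0 < k -> forall s : ptmap (2 ^ k) (2 ^ k), injective s ->
    gact s (wpow w k) = wpow w k.

(* Write M = 2^k = N * 2 with N = 2^(k-1), so that
   w^k = w^(k-1) w.  The map "id_[N] smash p^2_1" : [N * 2] -> [N] collapses the
   first copy of {1..N} to the basepoint and shifts the second copy down by N.
   Any pointed map f : [M] -> [N] whose nonzero fibres are singletons (the
   condition f(1_M) = 1_N in HN) is this kind of collapse precomposed with a
   permutation sigma of [M]: sigma lists the kernel of f first and sends the
   other points x to (M - N) + f(x).  Hence
     f(w^(k-1) w) = (id smash p^2_1)(sigma(w^k)) = (id smash p^2_1)(w^(k-1) w)
                  = w^(k-1) p^2_1(w) = w^(k-1) 1 = w^(k-1),
   using in turn the Sigma-invariance of w^k, naturality of the product, the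
   axiom p^2_1(w) = 1 and the right unit law. *)
From Pilot Require Import Defs.
From Stdlib Require Import FunctionalExtensionality.
From mathcomp Require Import all_boot zify.
Set Implicit Arguments. Unset Strict Implicit.

Lemma ptmap_ext n m (f g : ptmap n m) : f =1 g -> f = g.
Proof.
case: f g => f f0 [g g0] /= /functional_extensionality fg; subst g.
by rewrite (bool_irrelevance f0 g0).
Qed.

Lemma castpm_subproof a b (e : a = b) : cast_ord (congr1 S e) ord0 == ord0.
Proof. by apply/eqP; apply: val_inj. Qed.
Definition castpm a b (e : a = b) : ptmap a b := PMap (castpm_subproof e).

Lemma gact_cast (R : GammaRing) a b (e : a = b) (x : gcar R a) :
  gact (castpm e) x = eq_rect a (gcar R) x b e.
Proof.
case: b / e => /=; rewrite -[RHS](gact_id x); congr gact.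
by apply: ptmap_ext => i; apply: val_inj.
Qed.

Lemma smash_id_p21_val N (hN : 0 < N) (u : 'I_(N * 2).+1) :
  nat_of_ord (smash (pid N) p2_1 u) = if N < u then u - N else 0.
Proof.
rewrite /= /smash_fun; case: eqP => [-> // | u0].
have hu := ltn_ord u.
have Hd := divn_eq u.-1 N; have Hr := ltn_pmod u.-1 hN.
set q := u.-1 %/ N in Hd *; set r := u.-1 %% N in Hd Hr *.
have hq : q < 2 by nia.
rewrite /= /pface_fun /= (@inordK N r.+1) // (@inordK 2 q.+1) //.
case: q hq Hd => [|[|q]] // _ Hd /=; first by case: ifP => //; lia.
rewrite (@inordK 1 1) //= mul0n add0n inordK; last by lia.
by case: ifP; lia.
Qed.

Section UnitFibreFactorization.
Variables (M N : nat) (f : ptmap M N).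
Hypothesis hf : forall j : 'I_N.+1, j != ord0 -> hN_act f (@hN_ones _) j = 1.

Let f0 : f ord0 = ord0. Proof. exact/eqP/(pfun0 f). Qed.

Lemma unit_fibre_inj x y : f x = f y -> f x != ord0 -> x = y.
Proof.
move=> fxy fx_nz; apply/eqP/negPn/negP => nxy.
have := hf fx_nz; rewrite /hN_act (bigD1 x) //= (bigD1 y) /=; last first.
  by rewrite -fxy eqxx eq_sym.
have x_nz : x != ord0 by apply: contraNneq fx_nz => ->; rewrite f0.
have y_nz : y != ord0 by apply: contraNneq fx_nz; rewrite fxy => ->; rewrite f0.
by rewrite /hN_ones x_nz y_nz.
Qed.

Definition kernel := [pred x : 'I_M.+1 | (x != ord0) && (f x == ord0)].

(* Counting the M nonbase points fibre by fibre: #|kernel| + N = M. *)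
Lemma card_kernel : #|kernel| + N = M.
Proof.
have card_nz n : #|[pred i : 'I_n.+1 | i != ord0]| = n.
  by rewrite cardC1 card_ord.
have sum_ones : \sum_(i : 'I_M.+1) hN_ones i = M.
  rewrite -[RHS]card_nz -sum1_card.
  by rewrite [LHS](bigD1 ord0) //= add0n; apply: eq_bigr => i; rewrite /hN_ones => ->.
have fibre0 : hN_act f (@hN_ones _) ord0 = #|kernel|.
  rewrite /hN_act -sum1_card big_mkcond /= [RHS]big_mkcond /=.
  apply: eq_bigr => i _.
  by rewrite inE /hN_ones; case: (f i == ord0); case: (i != ord0).
rewrite -[in RHS]sum_ones (partition_big f predT) //= (bigD1 ord0) //=.
rewrite -[X in X + _]fibre0 -[X in _ + X]card_nz -sum1_card.
by congr addn; apply: eq_big => // j /hf.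
Qed.

Let zs := enum kernel.

Let in_zs x : f x = ord0 -> x != ord0 -> x \in zs.
Proof. by rewrite mem_enum /kernel inE => -> ->. Qed.

Let index_lt x : f x = ord0 -> x != ord0 -> index x zs < M - N.
Proof.
by move=> fx x0; rewrite -[M in M - N]card_kernel addnK cardE index_mem in_zs.
Qed.

Definition sigma_fun (x : 'I_M.+1) : 'I_M.+1 :=
  if f x != ord0 then inord (M - N + f x)
  else if x == ord0 then ord0 else inord (index x zs).+1.

Lemma sigma_val x : nat_of_ord (sigma_fun x) =
  if f x != ord0 then M - N + f x else if x == ord0 then 0 else (index x zs).+1.
Proof.
have := card_kernel; have := ltn_ord (f x); rewrite /sigma_fun.
case: ifP => fx ? ?; first by rewrite inordK //; lia.
case: ifP => x0 //; rewrite inordK //.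
by have := index_lt (eqP (negbFE fx)) (negbT x0); lia.
Qed.

Lemma sigma_subproof : sigma_fun ord0 == ord0.
Proof. by rewrite /sigma_fun f0 eqxx. Qed.
Definition sigma : ptmap M M := PMap sigma_subproof.

(* sigma is a permutation: the two blocks are disjoint and each is injective. *)
Lemma sigma_inj : injective sigma.
Proof.
move=> x y /(congr1 (@nat_of_ord _)); rewrite /= !sigma_val.
case: (f x =P ord0) => fx; case: (f y =P ord0) => fy /=.
- case: (x =P ord0) => [->|/eqP x0]; case: (y =P ord0) => [->|/eqP y0] //= [] e.
  by rewrite -(nth_index ord0 (in_zs fx x0)) e nth_index // in_zs.
- have : 0 < f y by rewrite lt0n; apply/eqP => fy0; apply: fy; exact: val_inj.
  case: (x =P ord0) => [_ /= | /eqP x0]; first lia.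
  by have := index_lt fx x0; lia.
- have : 0 < f x by rewrite lt0n; apply/eqP => fx0; apply: fx; exact: val_inj.
  case: (y =P ord0) => [_ /= | /eqP y0]; first lia.
  by have := index_lt fy y0; lia.
- move=> e; apply: unit_fibre_inj; last exact/eqP.
  by apply: val_inj; move: e => /eqP; rewrite eqn_add2l => /eqP.
Qed.

Lemma unit_fibre_factor x :
  nat_of_ord (f x) = if M - N < sigma x then sigma x - (M - N) else 0.
Proof.
rewrite /= sigma_val; case: (f x =P ord0) => [fx | /eqP fx]; rewrite ?fx /=.
  case: (x =P ord0) => [// | /eqP x0].
  by have := index_lt fx x0; case: ifP; lia.
have : 0 < f x by rewrite lt0n.
by case: ifP; lia.
Qed.

End UnitFibreFactorization.

Lemma unit_fibre_act_mul (R : GammaRing) (w : gcar R 2) (hw1 : gact p2_1 w = gone R)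
  N (hN : 0 < N) M (e : N * 2 = M) (x : gcar R N) (f : ptmap M N)
  (hf : forall j : 'I_N.+1, j != ord0 -> hN_act f (@hN_ones _) j = 1)
  (hsym : forall s : ptmap M M, injective s ->
     gact s (eq_rect _ (gcar R) (gmul x w) _ e) = eq_rect _ (gcar R) (gmul x w) _ e) :
  gact f (eq_rect _ (gcar R) (gmul x w) _ e) = x.
Proof.
case: M / e f hf hsym => f hf hsym /=.
have f_eq : f = Defs.pcomp (castpm (muln1 N)) (Defs.pcomp (smash (pid N) p2_1) (sigma f)).
  apply: ptmap_ext => v; apply: val_inj => /=.
  have twoN_subN : N * 2 - N = N by rewrite muln2 -addnn addnK.
  by rewrite smash_id_p21_val // (unit_fibre_factor hf) twoN_subN.
rewrite f_eq !gact_comp hsym; last exact: sigma_inj.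
by rewrite gmul_nat gact_id hw1 gact_cast gmulr1.
Qed.

(* w^k = w^(k-1) w is Sigma-invariant, so unit_fibre_act_mul applies. *)
Theorem lemma2p2p1 (R : GammaRing) (w : gcar R 2) (hw : formal_sum_law w)
  (k : nat) (hk : 0 < k) (f : ptmap (2 ^ k) (2 ^ k.-1))
  (hf : forall j : 'I_(2 ^ k.-1).+1, j != ord0 -> hN_act f (@hN_ones _) j = 1) :
  gact f (wpow w k) = wpow w k.-1.
Proof.
case: k hk f hf => // k _ f hf /=.
case: hw => hw1 [_ hsym].
exact: (unit_fibre_act_mul hw1 (expn_gt0 2 k) hf (hsym k.+1 isT)).
Qed.
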